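(* Let $k\in\mathbb N$, let $G=(V,E)$ be a graph, let $A,B\subseteq V$ and $v_0\in V$ satisfy: (A1) $A\cap B=\emptyset$, $|A|\ge k$ and $|B|\ge \mathscr R_k$; (A2) $A$ is a clique in $G$; (A3) $\{u,v_0\}\in E$ for every $u\in A$ and $\{v,v_0\}\notin E$ for every $v\in B$; (A4) $\{u,v\}\in E$ for every $u\in A$ and $v\in B$. Then $G$ has a $k$-edge induced subgraph.
   Context: All graphs are simple (finite, nonempty vertex set, undirected, no loops or multiple edges). $\mathscr R_k$ denotes the Ramsey number: the least number such that every graph with at least $\mathscr R_k$ vertices has a clique of size $k$ or an independent set of size $k$. A $k$-edge induced subgraph of $G$ is an induced subgraph $G[S]$ ($S\neq\emptyset$) with exactly $k$ edges. *)

From mathcomp Require Import all_boot.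
Set Implicit Arguments. Unset Strict Implicit. Unset Printing Implicit Defensive.

Definition simple_graph (T : finType) (e : rel T) : Prop :=
  symmetric e /\ irreflexive e.

Definition is_clique (T : finType) (e : rel T) (S : {set T}) : Prop :=
  forall u v, u \in S -> v \in S -> u != v -> e u v.
Definition is_indep (T : finType) (e : rel T) (S : {set T}) : Prop :=
  forall u v, u \in S -> v \in S -> ~~ e u v.

(* every graph with at least n vertices has a clique or an independent set of size k
   (graphs have a nonempty vertex set) *)
Definition ramsey_prop (k n : nat) : Prop :=
  forall (T : finType) (e : rel T), simple_graph e -> 0 < #|T| -> n <= #|T| ->
    exists S : {set T}, #|S| = k /\ (is_clique e S \/ is_indep e S).

Definition is_ramsey_number (k R : nat) : Prop :=
  ramsey_prop k R /\ forall n, ramsey_prop k n -> R <= n.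

Definition induced_edges (T : finType) (e : rel T) (S : {set T}) : {set {set T}} :=
  [set E : {set T} | (E \subset S) && (#|E| == 2) &&
     [forall u in E, forall v in E, (u != v) ==> e u v]].

Definition has_k_edge_induced (T : finType) (e : rel T) (k : nat) : Prop :=
  exists S : {set T}, S != set0 /\ #|induced_edges e S| = k.

(* Write k = 'C(i + j, 2) + j with i + j <= k.  By Ramsey, B contains a
   k-set K that is a clique or an independent set.  If K is independent, a
   vertex of A together with K spans exactly k edges (a star).  If K is a
   clique, it avoids v0 (for k >= 2), and i vertices of K, j vertices of A and
   v0 span the clique on i + j vertices plus the j edges from v0 to A. *)
From mathcomp Require Import all_boot.
Set Implicit Arguments. Unset Strict Implicit.

Lemma exists_subset_card (T : finType) (C : {set T}) i :
  i <= #|C| -> exists2 D : {set T}, D \subset C & #|D| = i.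
Proof.
move=> le_iC; have : 0 < #|[set D : {set T} | D \subset C & #|D| == i]|.
  by rewrite cards_draws bin_gt0.
by case/card_gt0P => D; rewrite inE => /andP[DC /eqP]; exists D.
Qed.

Lemma bin2_add_decomposition k :
  exists i j, [/\ i + j <= k, 'C(i + j, 2) + j = k & 0 < k -> 0 < j].
Proof.
elim: k => [|k [i [j [le_ijk def_k _]]]]; first by exists 0, 0.
case: i le_ijk def_k => [|i] le_ijk def_k.
- by exists j, 1; rewrite addn1 ltnS -def_k binS bin1 addn1 add0n leq_addl.
- by exists i, j.+1; rewrite addnS -addSn addnS def_k leqW.
Qed.

Lemma ramsey_prop_gt0 k n : 1 < k -> ramsey_prop k n -> 0 < n.
Proof.
move=> lt1k Rkn; rewrite lt0n; apply/eqP => n0.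
have unit_simple : simple_graph (fun _ _ : unit => false) by [].
have unit_gt0 : 0 < #|{: unit}| by rewrite card_unit.
have le_n_unit : n <= #|{: unit}| by rewrite n0.
have [S [Sk _]] := Rkn _ _ unit_simple unit_gt0 le_n_unit.
by move: (max_card S); rewrite Sk card_unit leqNgt lt1k.
Qed.

Lemma ramsey_prop_subset (T : finType) (e : rel T) (B : {set T}) k n :
  simple_graph e -> ramsey_prop k n -> 0 < #|B| -> n <= #|B| ->
  exists2 K : {set T}, K \subset B &
    #|K| = k /\ (is_clique e K \/ is_indep e K).
Proof.
move=> [e_sym e_irr] Rkn B_gt0 le_nB.
pose eB (x y : {x | x \in B}) := e (val x) (val y).
have eB_simple : simple_graph eB by split=> [x y|x]; [exact: e_sym | exact: e_irr].
have card_B : #|{: {x | x \in B}}| = #|B| by rewrite card_sig; apply: eq_card.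
have [||S [Sk cS]] := Rkn _ eB eB_simple; rewrite ?card_B //.
exists (val @: S); first by apply/subsetP=> _ /imsetP[x _ ->]; apply: valP.
split; first by rewrite card_imset //; apply: val_inj.
case: cS => [cS|iS]; [left|right] => _ _ /imsetP[x xS ->] /imsetP[y yS ->].
- by move=> xy; apply: cS => //; apply: contra xy => /eqP ->.
- exact: iS.
Qed.

Section InducedEdges.
Variables (T : finType) (e : rel T).
Hypothesis e_simple : simple_graph e.

Lemma induced_edgesP (S E : {set T}) :
  reflect (exists u w, [/\ u != w, u \in S, w \in S, e u w & E = [set u; w]])
          (E \in induced_edges e S).
Proof.
have [e_sym _] := e_simple.
rewrite inE; apply: (iffP idP).
- case/andP=> /andP[sES /cards2P[u [w [uw def_E]]]] /forall_inP e_E.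
  rewrite def_E in sES e_E; exists u, w.
  split => //; try by apply: (subsetP sES); rewrite !inE eqxx ?orbT.
  by have /forall_inP/(_ w) := e_E u (setU11 _ _); rewrite !inE eqxx orbT uw; apply.
- case=> u [w [uw uS wS e_uw ->]]; rewrite cards2 uw eqxx andbT.
  apply/andP; split; first by apply/subsetP=> z; rewrite !inE => /orP[]/eqP->.
  apply/forall_inP => a; rewrite !inE => /orP[]/eqP->;
  apply/forall_inP => b; rewrite !inE => /orP[]/eqP->;
  by rewrite ?eqxx // ?(e_sym w u) e_uw implybT.
Qed.

Lemma induced_edges_setU1 x (S : {set T}) : x \notin S ->
  induced_edges e (x |: S) =
  induced_edges e S :|: [set [set x; y] | y in [set y in S | e x y]].
Proof.
have [e_sym _] := e_simple.
move=> xS; apply/setP=> E; rewrite in_setU; apply/induced_edgesP/orP.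
- case=> u [w [uw]]; rewrite !in_setU1.
  case/orP=> [/eqP ?|uS] /orP[/eqP ?|wS] e_uw ->; subst.
  + by rewrite eqxx in uw.
  + by right; apply/imsetP; exists w; rewrite // inE wS.
  + right; apply/imsetP; exists u; first by rewrite inE uS -e_sym.
    by rewrite setUC.
  + by left; apply/induced_edgesP; exists u, w.
- case=> [/induced_edgesP[u [w [uw uS wS e_uw ->]]]|/imsetP[y]].
  + by exists u, w; rewrite !in_setU1 uS wS !orbT.
  + rewrite inE => /andP[yS e_xy] ->; exists x, y.
    rewrite !in_setU1 eqxx yS orbT; split => //.
    by apply: contraNneq xS => ->.
Qed.

Lemma card_induced_edges_setU1 x (S : {set T}) : x \notin S ->
  #|induced_edges e (x |: S)| = #|induced_edges e S| + #|[set y in S | e x y]|.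
Proof.
move=> xS; rewrite induced_edges_setU1 // cardsU.
have -> : induced_edges e S :&: [set [set x; y] | y in [set y in S | e x y]] = set0.
  apply/setP=> E; rewrite in_setI in_set0.
  apply/andP=> -[/induced_edgesP[u [w [_ uS wS _ ->]]] /imsetP[y _ Exy]].
  have : x \in [set u; w] by rewrite Exy !inE eqxx.
  by rewrite !inE => /orP[]/eqP xE; rewrite xE ?uS ?wS in xS.
rewrite cards0 subn0 card_in_imset // => y1 y2.
rewrite !inE => /andP[y1S _] _ Exy.
have : y1 \in [set x; y2] by rewrite -Exy !inE eqxx orbT.
by rewrite !inE => /orP[]/eqP // y1x; rewrite -y1x y1S in xS.
Qed.

Lemma card_induced_edges_indep (S : {set T}) :
  is_indep e S -> #|induced_edges e S| = 0.
Proof.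
move=> iS; apply/eqP; rewrite cards_eq0; apply/eqP/setP=> E; rewrite in_set0.
apply/negP=> /induced_edgesP[u [w [_ uS wS e_uw _]]].
by move: (iS u w uS wS); rewrite e_uw.
Qed.

Lemma card_induced_edges_clique (S : {set T}) :
  is_clique e S -> #|induced_edges e S| = 'C(#|S|, 2).
Proof.
move En: #|S| => n; elim: n S En => [|n IHn] S Sn cS.
  move/cards0_eq: Sn => ->.
  by rewrite card_induced_edges_indep // => u v; rewrite in_set0.
have /card_gt0P [x xS] : 0 < #|S| by rewrite Sn.
have S'n : #|S :\ x| = n by move: Sn; rewrite (cardsD1 x) xS => -[].
have cS' : is_clique e (S :\ x).
  by move=> u v; rewrite !inE => /andP[_ uS] /andP[_ vS]; apply: cS.
have N_x : [set y in S :\ x | e x y] = S :\ x.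
  apply/setP=> y; rewrite !inE; case: eqVneq => //= yx.
  by case yS: (y \in S) => //; apply: cS; rewrite // eq_sym.
rewrite -(setD1K xS) card_induced_edges_setU1 ?setD11 // (IHn _ S'n cS') N_x.
by rewrite S'n binS bin1.
Qed.
End InducedEdges.

Section CliqueAndIndependentCases.
Variables (T : finType) (e : rel T) (A B : {set T}) (v0 : T).
Hypotheses (e_simple : simple_graph e) (disjoint_AB : [disjoint A & B]).
Hypotheses (clique_A : is_clique e A) (A_adj_v0 : forall u, u \in A -> e u v0).
Hypothesis B_nadj_v0 : forall v, v \in B -> ~~ e v v0.
Hypothesis A_adj_B : forall u v, u \in A -> v \in B -> e u v.

Lemma v0_notin_clique_in_B (K : {set T}) :
  K \subset B -> is_clique e K -> 1 < #|K| -> v0 \notin K.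
Proof.
move=> KB cK lt1K; apply/negP => v0K.
have /card_gt0P[w] : 0 < #|K :\ v0| by move: lt1K; rewrite (cardsD1 v0) v0K.
rewrite !inE => /andP[wv0 wK].
by move: (B_nadj_v0 (subsetP KB w wK)); rewrite cK.
Qed.

Lemma k_edge_from_clique_in_B (C : {set T}) i j :
  C \subset B -> is_clique e C -> v0 \notin C -> i <= #|C| -> j <= #|A| ->
  has_k_edge_induced e ('C(i + j, 2) + j).
Proof.
have [e_sym e_irr] := e_simple.
move=> CB cC v0C le_iC le_jA.
have [Ci CiC Ci_i] := exists_subset_card le_iC.
have [Aj AjA Aj_j] := exists_subset_card le_jA.
have CiB := subset_trans CiC CB.
have disjoint_CiAj : [disjoint Ci & Aj].
  by rewrite disjoint_sym; apply: disjointW disjoint_AB.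
have card_Q : #|Ci :|: Aj| = i + j.
  by rewrite cardsU (disjoint_setI0 disjoint_CiAj) cards0 subn0 Ci_i Aj_j.
have clique_Q : is_clique e (Ci :|: Aj).
  move=> u v; rewrite !inE => /orP[uC|uA] /orP[vC|vA] uv.
  - by apply: cC => //; apply: (subsetP CiC).
  - by rewrite e_sym; apply: A_adj_B; [apply: (subsetP AjA)|apply: (subsetP CiB)].
  - by apply: A_adj_B; [apply: (subsetP AjA)|apply: (subsetP CiB)].
  - by apply: clique_A => //; apply: (subsetP AjA).
have v0Q : v0 \notin Ci :|: Aj.
  rewrite in_setU negb_or (contra (subsetP CiC v0)) //=.
  by apply/negP => /(subsetP AjA)/A_adj_v0; rewrite e_irr.
have N_v0 : [set y in Ci :|: Aj | e v0 y] = Aj.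
  apply/setP=> y; rewrite !inE; have [yA|yA] /= := boolP (y \in Aj).
  - by rewrite orbT e_sym A_adj_v0 // (subsetP AjA).
  - rewrite orbF; apply/negP=> /andP[/(subsetP CiB)/B_nadj_v0].
    by rewrite e_sym => /negP.
exists (v0 |: (Ci :|: Aj)); split; first by apply/set0Pn; exists v0; rewrite setU11.
by rewrite card_induced_edges_setU1 // card_induced_edges_clique // N_v0 card_Q Aj_j.
Qed.

Lemma k_edge_from_indep_in_B (K : {set T}) :
  K \subset B -> is_indep e K -> 0 < #|A| -> has_k_edge_induced e #|K|.
Proof.
move=> KB iK /card_gt0P[a aA].
have aK : a \notin K by apply: contraL aA => /(subsetP KB)/(disjointFl disjoint_AB)->.
exists (a |: K); split; first by apply/set0Pn; exists a; rewrite setU11.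
rewrite card_induced_edges_setU1 // card_induced_edges_indep //.
by apply: eq_card => y; rewrite inE andb_idr // => /(subsetP KB); apply: A_adj_B.
Qed.

End CliqueAndIndependentCases.

Theorem lemma3p6 (k : nat) (T : finType) (e : rel T) (A B : {set T}) (v0 : T) :
  simple_graph e ->
  [disjoint A & B] ->
  k <= #|A| ->
  (exists R, is_ramsey_number k R /\ R <= #|B|) ->
  is_clique e A ->
  (forall u, u \in A -> e u v0) ->
  (forall v, v \in B -> ~~ e v v0) ->
  (forall u v, u \in A -> v \in B -> e u v) ->
  has_k_edge_induced e k.
Proof.
move=> e_simple dAB le_kA [R [[Rk _] le_RB]] cA A_adj_v0 B_nadj_v0 A_adj_B.
have clique_case := k_edge_from_clique_in_B e_simple dAB cA A_adj_v0 B_nadj_v0 A_adj_B.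
have [i [j [le_ijk def_k j_gt0]]] := bin2_add_decomposition k.
have le_jA : j <= #|A| := leq_trans (leq_addl i j) (leq_trans le_ijk le_kA).
have [le_k1|lt1k] := leqP k 1.
  have le_kj : k <= j by case: (posnP k) => [->|/j_gt0]; last exact: leq_trans le_k1.
  have i0 : i = 0.
    by apply/eqP; rewrite -leqn0 -(leq_add2r j) (leq_trans le_ijk le_kj).
  rewrite -def_k i0; apply: (clique_case set0) => //; rewrite ?sub0set ?in_set0 //.
  by move=> u v; rewrite in_set0.
have [K KB [Kk [cK|iK]]] :=
  ramsey_prop_subset e_simple Rk (leq_trans (ramsey_prop_gt0 lt1k Rk) le_RB) le_RB.
- have v0K : v0 \notin K by apply: (v0_notin_clique_in_B B_nadj_v0); rewrite ?Kk.
  rewrite -def_k; apply: clique_case KB cK v0K _ le_jA.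
  by rewrite Kk (leq_trans (leq_addr j i)).
- rewrite -Kk; apply: (k_edge_from_indep_in_B e_simple dAB A_adj_B KB iK).
  exact: leq_trans (ltnW lt1k) le_kA.
Qed.
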